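(* Let $p$ be an odd prime and $E\subseteq\mathbb{Z}_p^2$. If $E$ tiles $\mathbb{Z}_p^2$ by translation, then $E$ is a spectral set.
   Context: $x\cdot a=x_1a_1+x_2a_2\pmod p$, $\chi(u)=e^{2\pi i u/p}$. $E$ tiles $\mathbb{Z}_p^2$ by translation if there is $T\subseteq\mathbb{Z}_p^2$ such that every $v\in\mathbb{Z}_p^2$ can be written uniquely as $v=e+t$ with $e\in E$, $t\in T$. $E$ is spectral if there is $A\subseteq\mathbb{Z}_p^2$ such that (Completeness) for every $f:E\to\mathbb{C}$ there are complex numbers $(c_a)_{a\in A}$ with $f(x)=\sum_{a\in A}c_a\chi(x\cdot a)$ for all $x\in E$, and (Orthogonality) $\sum_{x\in E}\chi(x\cdot(a-a'))=0$ for all distinct $a,a'\in A$. *)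

From mathcomp Require Import all_boot all_order all_algebra.
From mathcomp Require Import complex.
From mathcomp Require Import reals trigo.
From mathcomp Require Import Rstruct.
Set Implicit Arguments. Unset Strict Implicit. Unset Printing Implicit Defensive.
Import Order.TTheory GRing.Theory Num.Theory.
Local Open Scope ring_scope.
Local Open Scope complex_scope.

Definition Cx := (Rdefinitions.R)[i].

Definition pt (p : nat) := ('F_p * 'F_p)%type.

Definition dotp (p : nat) (x a : pt p) : 'F_p := x.1 * a.1 + x.2 * a.2.

(* chi(u) = exp(2 pi i u / p) = cos(2 pi u/p) + i sin(2 pi u/p), u taken as
   its representative in {0,...,p-1}. *)
Definition chi (p : nat) (u : 'F_p) : Cx :=
  let t : Rdefinitions.R := (2 * pi * (nat_of_ord u)%:R / p%:R)%R in
  (cos t +i* sin t)%C.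

Definition tiles (p : nat) (E : {set pt p}) : Prop :=
  exists T : {set pt p},
    forall v : pt p, exists! et : pt p * pt p,
      [/\ et.1 \in E, et.2 \in T & v = et.1 + et.2].

Definition spectral (p : nat) (E : {set pt p}) : Prop :=
  exists A : {set pt p},
    (forall f : pt p -> Cx, exists c : pt p -> Cx,
        forall x, x \in E -> f x = \sum_(a in A) c a * chi (dotp x a))
    /\ (forall a a', a \in A -> a' \in A -> a != a' ->
          \sum_(x in E) chi (dotp x (a - a')) = 0).

(* Tiling gives |E| |T| = p^2, so |E| is 1, p or p^2, and only |E| = p needs an
   argument.  For xi <> 0 the Fourier transform of the indicator of Z_p^2 vanishes
   at xi and factors as the product of those of E and T, so one of the two
   vanishes at xi.  If a set X of size p has vanishing transform at xi, the
   numbers of x in X with x.xi = k give a vanishing rational combination of the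
   p-th roots of unity, which by irreducibility of the p-th cyclotomic
   polynomial has constant coefficients: X meets every line x.xi = k exactly
   once.  Taking xi orthogonal to the difference of two points of T shows that
   T cannot have this property, so E does, and then the line F_p xi is a
   spectrum for E. *)

From mathcomp Require Import all_boot all_order all_algebra all_field.
From mathcomp Require Import complex Rstruct reals trigo zify ring.
Set Implicit Arguments. Unset Strict Implicit. Unset Printing Implicit Defensive.
Import Order.TTheory GRing.Theory Num.Theory.
Local Open Scope ring_scope.

Section Dotp.
Variable p : nat.
Implicit Types x y a : pt p.

Lemma dotpDl x y a : dotp (x + y) a = dotp x a + dotp y a.
Proof. by rewrite /dotp /=; ring. Qed.

Lemma dotpBl x y a : dotp (x - y) a = dotp x a - dotp y a.
Proof. by rewrite /dotp /=; ring. Qed.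

Lemma dotpC x a : dotp x a = dotp a x.
Proof. by rewrite /dotp; ring. Qed.

End Dotp.

Section Character.
Variables (p : nat) (p_pr : prime p).

Definition expip (n : nat) : Cx :=
  let t : Rdefinitions.R := 2 * pi * n%:R / p%:R in (cos t +i* sin t)%C.

Lemma expipD m n : expip (m + n) = expip m * expip n.
Proof.
rewrite /expip natrD mulrDr mulrDl cosD sinD.
by apply/eqP; rewrite eq_complex /= eqxx andTb addrC.
Qed.

Lemma expip_p : expip p = 1.
Proof.
rewrite /expip -mulrA mulfV ?pnatr_eq0 -?lt0n ?prime_gt0 // mulr1.
by rewrite mulrC mulr_natr cos2pi sin2pi.
Qed.

Lemma expipX n : expip n = expip 1 ^+ n.
Proof.
elim: n => [|n IHn]; last by rewrite -addn1 expipD IHn exprD expr1.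
by rewrite /expip !mulr0 mul0r cos0 sin0.
Qed.

Lemma expip1_expp : expip 1 ^+ p = 1.
Proof. by rewrite -expipX expip_p. Qed.

Lemma expip_mod n : expip (n %% p) = expip n.
Proof.
by rewrite [in RHS](divn_eq n p) expipD [expip (_ * _)]expipX mulnC exprM expip1_expp expr1n mul1r.
Qed.

Lemma expip1_neq1 : expip 1 != 1.
Proof.
apply/eqP => /(congr1 (@complex.Re _)) /= cos_t.
have p_gt0 : (0 : Rdefinitions.R) < p%:R by rewrite ltr0n prime_gt0.
move: cos_t; set t := _ / _ => cos_t.
have t_gt0 : 0 < t by rewrite divr_gt0 ?mulr_gt0 ?pi_gt0.
have t_le_pi : t <= pi.
  rewrite /t mulr1 ler_pdivrMr // mulrC ler_pM2l ?pi_gt0 //.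
  by rewrite (ler_nat _ 2) prime_gt1.
have t0 : t = 0.
  by apply: cos_inj; rewrite ?cos0 // !in_itv /= ?lexx ?pi_ge0 ?(ltW t_gt0).
by move: t_gt0; rewrite t0 ltxx.
Qed.

Lemma chiE (u : 'F_p) : chi u = expip u.
Proof. by []. Qed.

Lemma chiD (u v : 'F_p) : chi (u + v) = chi u * chi v.
Proof.
rewrite !chiE -expipD -[RHS]expip_mod /=.
suff -> : ((u + v) %% (Zp_trunc (pdiv p)).+2 = (u + v) %% p)%N by [].
by congr (_ %% _)%N; rewrite Fp_cast.
Qed.

Lemma chi_expip1 (u : 'F_p) : chi u = expip 1 ^+ u.
Proof. exact: expipX. Qed.

Lemma sum_chi : \sum_(u : 'F_p) chi u = 0.
Proof.
have chi1 : chi (1 : 'F_p) = expip 1 by rewrite chiE /= modn_small.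
have shift : \sum_(u : 'F_p) chi u = (\sum_(u : 'F_p) chi u) * expip 1.
  rewrite -chi1 mulr_suml [LHS](reindex_inj (addIr (1 : 'F_p))) /=.
  by apply: eq_bigr => u _; rewrite chiD.
apply/eqP; move/eqP: shift; rewrite -subr_eq0 -{1}[\sum_u chi u]mulr1 -mulrBr.
by rewrite mulf_eq0 subr_eq0 [1 == _]eq_sym (negbTE expip1_neq1) orbF.
Qed.

Lemma sum_chiMr (s : 'F_p) : s != 0 -> \sum_(t : 'F_p) chi (t * s) = 0.
Proof. by move=> s_neq0; rewrite -[RHS]sum_chi [RHS](reindex_inj (mulIf s_neq0)). Qed.

Lemma sum_chi_dotp (d : pt p) : d != 0 -> \sum_(x : pt p) chi (dotp x d) = 0.
Proof.
have -> : \sum_(x : pt p) chi (dotp x d) =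
    (\sum_(i : 'F_p) chi (i * d.1)) * (\sum_(j : 'F_p) chi (j * d.2)).
  by rewrite big_distrlr pair_bigA; apply: eq_bigr => x _; rewrite /dotp chiD.
case: d => d1 d2; rewrite xpair_eqE negb_and => /orP[] d_neq0.
  by rewrite sum_chiMr ?mul0r.
by rewrite [X in _ * X]sum_chiMr ?mulr0.
Qed.

Lemma spectral_of_dual_orthogonal (E A : {set pt p}) : A != set0 ->
    (forall a a', a \in A -> a' \in A -> a != a' ->
      \sum_(x in E) chi (dotp x (a - a')) = 0) ->
    (forall x y, x \in E -> y \in E -> x != y ->
      \sum_(a in A) chi (dotp x a - dotp y a) = 0) ->
  spectral E.
Proof.
move=> A_neq0 orthA orthE; exists A; split => // f.
exists (fun a => #|A|%:R^-1 * \sum_(y in E) f y * chi (- dotp y a)) => x xE.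
have -> : \sum_(a in A) #|A|%:R^-1 * (\sum_(y in E) f y * chi (- dotp y a)) * chi (dotp x a)
    = #|A|%:R^-1 * \sum_(y in E) f y * \sum_(a in A) chi (dotp x a - dotp y a).
  under eq_bigr => a _ do rewrite -mulrA mulr_suml.
  rewrite -mulr_sumr exchange_big /=; congr (_ * _); apply: eq_bigr => y _.
  by rewrite mulr_sumr; apply: eq_bigr => a _; rewrite -mulrA -chiD addrC.
rewrite (bigD1 x xE) /= [X in _ + X]big1 ?addr0; last first.
  by move=> y /andP[yE y_neq_x]; rewrite orthE 1?eq_sym ?mulr0.
under eq_bigr => a _ do rewrite subrr chiE expipX expr0.
rewrite sumr_const mulrC mulr_natr -mulr_natr -mulrA mulfV ?mulr1 //.
by rewrite pnatr_eq0 -lt0n card_gt0.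
Qed.

End Character.

Lemma map_ratr_poly (S : numFieldType) n (c : nat -> rat) :
  map_poly (ratr : rat -> S) (\poly_(i < n) c i) = \poly_(i < n) ratr (c i).
Proof.
apply/polyP => i; rewrite coef_map_id0 ?rmorph0 // !coef_poly.
by case: ifP; rewrite ?rmorph0.
Qed.

Section PrimeCyclotomic.
Variables (p : nat) (p_pr : prime p).

Definition Phi : {poly rat} := \poly_(i < p) 1.

Lemma size_Phi : size Phi = p.
Proof. by rewrite size_poly_eq ?oner_eq0. Qed.

Lemma Phi_neq0 : Phi != 0.
Proof. by rewrite -size_poly_eq0 size_Phi -lt0n prime_gt0. Qed.

Lemma root_Phi (S : numFieldType) (x : S) : x ^+ p = 1 -> x != 1 ->
  root (map_poly ratr Phi) x.
Proof.
move=> xp x_neq1; rewrite /root map_ratr_poly rmorph1 horner_poly.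
have := subrX1 x p; rewrite xp subrr => /esym/eqP.
by rewrite mulf_eq0 subr_eq0 (negbTE x_neq1) (eq_bigr _ (fun i _ => mul1r _)).
Qed.

Lemma root_prim_Phi_dvd (z : algC) : p.-primitive_root z ->
  forall q : {poly rat}, root (map_poly ratr q) z = (Phi %| q).
Proof.
move=> z_prim q; have [m [Dm _] root_m] := minCpolyP z.
have size_m : size m = p.
  rewrite -(size_map_poly (ratr : {rmorphism rat -> algC})) -Dm.
  by rewrite (minCpoly_cyclotomic z_prim) size_cyclotomic totient_prime // prednK ?prime_gt0.
have z_neq1 : z != 1.
  apply: contraTneq (prime_gt1 p_pr) => z1.
  by have := prim_order_dvd z_prim 1; rewrite z1 expr1 eqxx dvdn1 => /eqP->.
have m_dvd : m %| Phi by rewrite -root_m root_Phi ?prim_expr_order.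
have : m %= Phi by rewrite -dvdp_size_eqp // size_m size_Phi.
by move/eqp_dvdl <-; rewrite root_m.
Qed.

Lemma Phi_dvd_of_root (S : numFieldType) (x : S) : x ^+ p = 1 -> x != 1 ->
  forall q : {poly rat}, root (map_poly ratr q) x -> Phi %| q.
Proof.
move=> xp x_neq1 q root_q; have [z z_prim] := C_prim_root_exists (prime_gt0 p_pr).
(* Phi is irreducible since it is the minimal polynomial of z in algC; the
   common factor g of q and Phi is nonconstant because x is a root, so g ~ Phi. *)
pose g := gcdp q Phi.
have root_g : root (map_poly (ratr : {rmorphism rat -> S}) g) x.
  by rewrite gcdp_map root_gcd root_q root_Phi.
have /dvdpP [h Phi_hg] : g %| Phi by exact: dvdp_gcdr.
have h_neq0 : h != 0 by apply: contraNneq Phi_neq0 => h0; rewrite Phi_hg h0 mul0r.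
have g_neq0 : g != 0 by apply: contraNneq Phi_neq0 => g0; rewrite Phi_hg g0 mulr0.
have : root (map_poly (ratr : {rmorphism rat -> algC}) (h * g)) z.
  by rewrite -Phi_hg root_prim_Phi_dvd.
rewrite rmorphM rootM !root_prim_Phi_dvd // => /orP[Phi_dvd_h | Phi_dvd_g].
  have size_g : size g = 1%N.
    have := size_mul h_neq0 g_neq0; rewrite -Phi_hg size_Phi.
    have := dvdp_leq h_neq0 Phi_dvd_h; rewrite size_Phi.
    have := size_poly_gt0 g; rewrite g_neq0 => g_gt0 h_ge.
    by rewrite -subn1; move: (size g) g_gt0 => n; lia.
  have /eqP/size_poly1P [c c_neq0 gc] := size_g.
  by move: root_g; rewrite gc map_polyC rootC fmorph_eq0 (negbTE c_neq0).
exact: dvdp_trans Phi_dvd_g (dvdp_gcdl q Phi).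
Qed.

Lemma sum_root_unity_eq0_const (S : numFieldType) (x : S) : x ^+ p = 1 -> x != 1 ->
  forall c : nat -> rat, \sum_(i < p) ratr (c i) * x ^+ i = 0 ->
  forall i, (i < p)%N -> c i = c 0%N.
Proof.
move=> xp x_neq1 c sum_eq0; pose q := \poly_(i < p) c i.
have /dvdpP [k q_kPhi] : Phi %| q.
  by apply: (Phi_dvd_of_root xp x_neq1); rewrite /root map_ratr_poly horner_poly sum_eq0.
have size_k : (size k <= 1)%N.
  have [->|k_neq0] := eqVneq k 0; first by rewrite size_poly0.
  have := size_poly p c; rewrite -/q q_kPhi size_mul ?Phi_neq0 // size_Phi.
  by rewrite -subn1 leq_subLR leq_add2r.
have coef_q i : (i < p)%N -> c i = q`_i by move=> ip; rewrite coef_poly ip.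
move=> i ip; rewrite coef_q // coef_q ?prime_gt0 // q_kPhi (size1_polyC size_k).
by rewrite !coefCM !coef_poly ip prime_gt0.
Qed.

End PrimeCyclotomic.

Section Fibers.
Variables (p : nat) (p_pr : prime p).

Lemma big_Fp (R : nmodType) (F : nat -> R) : \sum_(u : 'F_p) F u = \sum_(i < p) F i.
Proof. by rewrite -!(big_mkord xpredT) Fp_cast. Qed.

Lemma Fp_val_lt (u : 'F_p) : (u < p)%N.
Proof. by rewrite -[X in (_ < X)%N](Fp_cast p_pr). Qed.

Variables (X : {set pt p}) (xi : pt p).

Definition dotp_fiber (k : 'F_p) := [set x in X | dotp x xi == k].

Lemma card_dotp_fibers : #|X| = (\sum_(k : 'F_p) #|dotp_fiber k|)%N.
Proof.
rewrite -sum1_card (partition_big (fun x => dotp x xi) xpredT) //=.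
by apply: eq_bigr => k _; rewrite -sum1_card; apply: eq_bigl => x; rewrite inE.
Qed.

Lemma sum_chi_dotp_fibers :
  \sum_(x in X) chi (dotp x xi) = \sum_(k : 'F_p) #|dotp_fiber k|%:R * chi k.
Proof.
rewrite (partition_big (fun x => dotp x xi) xpredT) //=; apply: eq_bigr => k _.
rewrite (eq_bigr (fun=> chi k)) => [|x /andP[_ /eqP-> //]].
by rewrite sumr_const mulr_natl; congr (_ *+ _); apply: eq_card => x; rewrite inE.
Qed.

Lemma card_dotp_fiber_const : \sum_(x in X) chi (dotp x xi) = 0 ->
  forall k, #|dotp_fiber k| = #|dotp_fiber 0|.
Proof.
rewrite sum_chi_dotp_fibers => sum_eq0 k.
pose c (i : nat) : rat := #|dotp_fiber i%:R|%:R.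
have sum_c : \sum_(i < p) ratr (c i) * expip p 1 ^+ i = 0.
  rewrite -(big_Fp (fun i => ratr (c i) * expip p 1 ^+ i)) -[RHS]sum_eq0.
  by apply: eq_bigr => u _; rewrite ratr_nat natr_Zp chi_expip1.
have := sum_root_unity_eq0_const p_pr (expip1_expp p_pr) (expip1_neq1 p_pr) sum_c.
move=> /(_ k); rewrite /c natr_Zp => /(_ (Fp_val_lt k)) /eqP.
by rewrite eqr_nat => /eqP.
Qed.

Lemma dotp_injective_of_sum_chi_eq0 : #|X| = p ->
  \sum_(x in X) chi (dotp x xi) = 0 -> {in X &, injective (fun x => dotp x xi)}.
Proof.
move=> card_X /card_dotp_fiber_const fiber_const.
have fiber1 k : #|dotp_fiber k| = 1%N.
  move: card_X; rewrite fiber_const card_dotp_fibers (eq_bigr _ (fun k _ => fiber_const k)).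
  rewrite sum_nat_const card_Fp // => /eqP.
  by rewrite -[X in _ == X]muln1 eqn_pmul2l ?prime_gt0 // => /eqP.
move=> x y xX yX /= dotp_xy; apply/eqP; apply: contraT => x_neq_y.
have : (#|[set x; y]| <= #|dotp_fiber (dotp x xi)|)%N.
  apply/subset_leq_card/subsetP => w; rewrite !inE.
  by case/orP => /eqP->; rewrite ?xX ?yX -?dotp_xy eqxx.
by rewrite cards2 x_neq_y fiber1.
Qed.

End Fibers.

Section Tiling.
Variables (p : nat) (p_pr : prime p) (E T : {set pt p}).
Hypothesis tile_ET : forall v : pt p, exists! et : pt p * pt p,
  [/\ et.1 \in E, et.2 \in T & v = et.1 + et.2].

Let add_pair (et : pt p * pt p) : pt p := et.1 + et.2.

Lemma tile_add_inj : {in setX E T &, injective add_pair}.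
Proof.
move=> [e t] [e' t'] /setXP[eE tT] /setXP[eE' tT'] eq_sum.
have [et0 [_ uniq_et]] := tile_ET (add_pair (e, t)).
by rewrite -(uniq_et (e, t)) ?(uniq_et (e', t')).
Qed.

Lemma tile_add_onto : [set add_pair et | et in setX E T] = setT.
Proof.
apply/setP => v; rewrite inE; have [[e t] [[/= eE tT ->] _]] := tile_ET v.
by apply/imsetP; exists (e, t); rewrite ?inE ?eE.
Qed.

Lemma card_tile : (#|E| * #|T| = p ^ 2)%N.
Proof.
by rewrite -cardsX -(card_in_imset tile_add_inj) tile_add_onto cardsT card_prod card_Fp.
Qed.

Lemma sum_chi_tile (xi : pt p) : \sum_(v : pt p) chi (dotp v xi) =
  (\sum_(e in E) chi (dotp e xi)) * (\sum_(t in T) chi (dotp t xi)).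
Proof.
transitivity (\sum_(v in setT) chi (dotp v xi)); first by apply: eq_bigl => v; rewrite inE.
rewrite big_distrlr pair_big_dep /= -tile_add_onto big_imset /=.
  by apply: eq_big => [[e t]|[e t] _]; rewrite ?inE //= dotpDl chiD.
exact: tile_add_inj.
Qed.

Lemma tile_card_p_sum_chi_eq0 : #|E| = p ->
  exists2 xi : pt p, xi != 0 & \sum_(e in E) chi (dotp e xi) = 0.
Proof.
move=> card_E; have card_T : #|T| = p.
  by have /eqP := card_tile; rewrite card_E expnS expn1 eqn_pmul2l ?prime_gt0 // => /eqP.
have /card_gt1P [t [t' [tT t'T t_neq_t']]] : (1 < #|T|)%N by rewrite card_T prime_gt1.
pose d := t - t'; pose xi : pt p := (- d.2, d.1).
(* xi is orthogonal to t - t', so x |-> x.xi does not separate t and t'. *)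
have xi_neq0 : xi != 0.
  apply: contra t_neq_t'; rewrite -[t == t']subr_eq0 -/d [d]surjective_pairing.
  by rewrite /xi !xpair_eqE /= oppr_eq0 andbC.
have dotp_tt' : dotp t xi = dotp t' xi.
  by apply/eqP; rewrite -subr_eq0 -dotpBl /dotp /=; apply/eqP; ring.
exists xi => //; apply/eqP; apply: contraT => sum_E_neq0.
have /eqP : (\sum_(e in E) chi (dotp e xi)) * (\sum_(t in T) chi (dotp t xi)) = 0.
  by rewrite -sum_chi_tile sum_chi_dotp.
rewrite mulf_eq0 (negbTE sum_E_neq0) /= => /eqP sum_T_eq0.
have := dotp_injective_of_sum_chi_eq0 p_pr card_T sum_T_eq0 tT t'T dotp_tt'.
by move/eqP; rewrite (negbTE t_neq_t').
Qed.

End Tiling.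

Section SpectralSets.
Variables (p : nat) (p_pr : prime p).

Lemma spectral_set1 (e : pt p) : spectral [set e].
Proof.
apply: (spectral_of_dual_orthogonal p_pr (A := [set 0 : pt p])).
  by apply/set0Pn; exists 0; rewrite inE.
  by move=> a a'; rewrite !inE => /eqP-> /eqP->; rewrite eqxx.
by move=> x y; rewrite !inE => /eqP-> /eqP->; rewrite eqxx.
Qed.

Lemma spectral_setT : spectral [set: pt p].
Proof.
apply: (spectral_of_dual_orthogonal p_pr (A := [set: pt p])).
  by apply/set0Pn; exists 0; rewrite inE.
  move=> a a' _ _ a_neq_a'; rewrite -[RHS](sum_chi_dotp p_pr (d := a - a')) ?subr_eq0 //.
  by apply: eq_bigl => x; rewrite inE.
move=> x y _ _ x_neq_y; rewrite -[RHS](sum_chi_dotp p_pr (d := x - y)) ?subr_eq0 //.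
by apply: eq_big => [a|a _]; rewrite ?inE // [dotp a _]dotpC dotpBl.
Qed.

Lemma spectral_of_dotp_injective (E : {set pt p}) (xi : pt p) : xi != 0 -> #|E| = p ->
  {in E &, injective (fun x => dotp x xi)} -> spectral E.
Proof.
move=> xi_neq0 card_E dotp_inj; pose line (t : 'F_p) : pt p := (t * xi.1, t * xi.2).
have line_inj : injective line.
  move=> t t' /eqP; rewrite xpair_eqE => /andP[/eqP eq1 /eqP eq2].
  move: xi_neq0; rewrite [xi]surjective_pairing xpair_eqE negb_and /=.
  by case/orP => /mulIf inj; apply: inj.
have sum_E (F : 'F_p -> Cx) : \sum_(x in E) F (dotp x xi) = \sum_u F u.
  have dotp_onto : [set dotp x xi | x in E] = setT.
    apply/eqP; rewrite eqEcard subsetT cardsT (card_in_imset dotp_inj) card_E.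
    by rewrite card_ord Fp_cast ?leqnn.
  by rewrite -(big_imset F dotp_inj) /= dotp_onto; apply: eq_bigl => u; rewrite inE.
apply: (spectral_of_dual_orthogonal p_pr (A := [set line t | t in 'F_p])).
- by apply/set0Pn; exists (line 0); apply: imset_f.
- move=> _ _ /imsetP[t _ ->] /imsetP[t' _ ->] line_neq.
  have tt'_neq0 : t - t' != 0 by rewrite subr_eq0; apply: contraNneq line_neq => ->.
  rewrite (eq_bigr (fun x => chi (dotp x xi * (t - t')))).
    by rewrite (sum_E (fun u => chi (u * (t - t')))) sum_chiMr.
  by move=> x _; congr chi; rewrite /dotp /=; ring.
- move=> x y xE yE x_neq_y; rewrite big_imset => [|? ? _ _ /line_inj //].
  have dotp_neq : dotp x xi - dotp y xi != 0.
    by rewrite subr_eq0; apply: contra_neq x_neq_y; apply: dotp_inj.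
  rewrite (eq_big xpredT (fun t => chi (t * (dotp x xi - dotp y xi)))) ?sum_chiMr //.
  by move=> t _; congr chi; rewrite /dotp /=; ring.
Qed.

End SpectralSets.

Theorem mainTheorem4 (p : nat) (E : {set pt p}) :
  prime p -> odd p -> tiles E -> spectral E.
Proof.
move=> p_pr _ [T tile_ET].
have : (#|E| %| p ^ 2)%N by rewrite -(card_tile p_pr tile_ET) dvdn_mulr.
case/(dvdn_pfactor _ _ p_pr) => -[|[|[|m]]] // _ card_E.
- have /cards1P [e ->] : #|E| == 1%N by rewrite card_E.
  exact: spectral_set1.
- rewrite expn1 in card_E.
  have [xi xi_neq0 sum_E_eq0] := tile_card_p_sum_chi_eq0 p_pr tile_ET card_E.
  apply: (spectral_of_dotp_injective p_pr xi_neq0 card_E).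
  exact: (dotp_injective_of_sum_chi_eq0 p_pr card_E sum_E_eq0).
- have -> : E = setT.
    by apply/eqP; rewrite eqEcard subsetT cardsT card_prod card_Fp // card_E mulnn leqnn.
  exact: (spectral_setT p_pr).
Qed.
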